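(* Let $G=(V,E)$ be a finite connected graph with arc set $A$. (a) Let $w_1:A\to\mathbb{C}$ with $\sum_{e:\,o(e)=u}|w_1(e)|^2=1$ for all $u\in V$, and let $(U_1\psi)(e)=\sum_{f:\,t(f)=o(e)}\big(2w_1(e)\overline{w_1(\bar f)}-\delta_{e,\bar f}\big)\psi(f)$ on functions $\psi:A\to\mathbb{C}$. Let $T$ be the operator on functions on $V$ given by $(Tf)(u)=\sum_{e:\,o(e)=u}w_1(e)\overline{w_1(\bar e)}f(t(e))$, and $\varphi_1(x)=(x+x^{-1})/2$. For $s\in\{1,-1\}$ put $n_s=|E|-|V|+\mathbf{1}_{\{s\in\sigma(T)\}}$. Then $\sigma(U_1)=\varphi_1^{-1}(\sigma(T))\cup\{1:n_1>0\}\cup\{-1:n_{-1}>0\}$ (i.e., $1$ is added iff $n_1>0$ and $-1$ is added iff $n_{-1}>0$). (b) Let $w_2:A\to(0,\infty)$ with $\sum_{e:\,o(e)=u}w_2(e)=1$ for all $u\in V$, and suppose there is $m_V:V\to(0,\infty)$ with $m_V(o(e))w_2(e)=m_V(t(e))w_2(\bar e)$ for all $e\in A$. Let $(U_2\psi)(e)=\sum_{f:\,t(f)=o(e)}\big(2w_2(\bar f)-\delta_{e,\bar f}\big)\psi(f)$, let $(Lf)(u)=\sum_{e:\,o(e)=u}w_2(e)f(t(e))-f(u)$, and $\varphi_2(x)=(x+x^{-1})/2-1$. Then $\sigma(U_2)=\varphi_2^{-1}(\sigma(L))$ if $G$ is a tree; $\sigma(U_2)=\varphi_2^{-1}(\sigma(L))\cup\{1\}$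 if $G$ has exactly one cycle and is not bipartite; and $\sigma(U_2)=\varphi_2^{-1}(\sigma(L))\cup\{1,-1\}$ otherwise.
   Context: $A=\{(u,v):\{u,v\}\in E\}$; for $e=(u,v)$, $o(e)=u$, $t(e)=v$, $\bar e=(v,u)$. $\delta$ is the Kronecker delta, $\mathbf{1}$ an indicator, $\sigma(\cdot)$ the spectrum (set of eigenvalues), and for a function $\varphi$ and set $X$, $\varphi^{-1}(X)=\{x\in\mathbb{C}\setminus\{0\}:\varphi(x)\in X\}$. ''Exactly one cycle'' means $|E|=|V|$ for the connected graph $G$. *)

From HB Require Import structures.
From mathcomp Require Import all_boot all_order all_algebra.
From mathcomp Require Import complex.
From mathcomp Require Import reals.
Set Implicit Arguments. Unset Strict Implicit. Unset Printing Implicit Defensive.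
Import Order.TTheory GRing.Theory Num.Theory.
Local Open Scope ring_scope.
Local Open Scope complex_scope.

Definition simple_graph (V : finType) (adj : rel V) :=
  symmetric adj /\ irreflexive adj.

Definition connected_graph (V : finType) (adj : rel V) :=
  (0 < #|V|)%N /\ forall x y : V, connect adj x y.

(* Arc set A = {(u,v) : {u,v} in E}. o(e) = (val e).1, t(e) = (val e).2,
   and the reversed arc of e is ((val e).2, (val e).1). *)
Definition garc (V : finType) (adj : rel V) := {p : (V * V)%type | adj p.1 p.2}.

Definition edges (V : finType) (adj : rel V) : {set {set V}} :=
  [set [set x; y] | x in V, y in V & adj x y].

Definition bipartite (V : finType) (adj : rel V) :=
  exists c : V -> bool, forall x y, adj x y -> c x != c y.

(* Matrix of the linear operator (K psi)(i) = sum_j K i j psi(j) on functions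
   X -> F, in the basis of indicator functions enumerated by enum X. *)
Definition opmx (F : fieldType) (X : finType) (K : X -> X -> F) : 'M[F]_#|X| :=
  \matrix_(i, j) K (enum_val i) (enum_val j).

Definition spectrum (F : fieldType) (X : finType) (K : X -> X -> F) : pred F :=
  fun a => eigenvalue (opmx K) a.

Definition preim_nz (F : fieldType) (phi : F -> F) (S : pred F) : pred F :=
  fun x => (x != 0) && S (phi x).

Section Ops.
Variables (R : realType) (V : finType) (adj : rel V).
Local Notation C := R[i].
Local Notation A := (garc adj).

Definition U1_kernel (w : V -> V -> C) (e f : A) : C :=
  if (val f).2 == (val e).1 then
    2 * w (val e).1 (val e).2 * conjc (w (val f).2 (val f).1)
    - ((val e == ((val f).2, (val f).1)) %:R)
  else 0.

Definition T_kernel (w : V -> V -> C) (u v : V) : C :=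
  \sum_(e : A | ((val e).1 == u) && ((val e).2 == v))
     w (val e).1 (val e).2 * conjc (w (val e).2 (val e).1).

Definition phi1 (x : C) : C := (x + x^-1) / 2.

Definition U2_kernel (w : V -> V -> R) (e f : A) : C :=
  if (val f).2 == (val e).1 then
    2 * (w (val f).2 (val f).1)%:C - ((val e == ((val f).2, (val f).1)) %:R)
  else 0.

Definition L_kernel (w : V -> V -> R) (u v : V) : C :=
  (\sum_(e : A | ((val e).1 == u) && ((val e).2 == v)) (w (val e).1 (val e).2)%:C)
  - (u == v)%:R.

Definition phi2 (x : C) : C := (x + x^-1) / 2 - 1.
End Ops.

Arguments U1_kernel {R V} adj w e f.
Arguments U2_kernel {R V} adj w e f.
Arguments T_kernel {R V} adj w u v.
Arguments L_kernel {R V} adj w u v.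

(* Write U psi (e) = 2 a(e) d(psi o rev)(o(e)) - psi(rev e), where d psi (u) is the outflow
   sum_{o(e) = u} c(e) psi(e) and sum_{o(e) = u} c(e) a(e) = 1, and let M be the vertex operator
   M g (u) = sum_{o(e) = u} c(e) a(rev e) g(t(e)); in (a) (c, a) = (conj w1, w1) and M = T, in (b)
   (c, a) = (w2, 1) and M = L + 1.  For an eigenvector psi of U with eigenvalue x, d(psi o rev) =
   x d psi and 2 x M (d psi) = (1 + x^2) d psi.  So either d psi is an eigenvector of M for
   (x + 1/x)/2, or d psi = 0, psi(rev e) = - x psi(e) and x = 1 or -1: psi is a twisted cycle.
   Eigenvectors of M lift back to U.  Twisted cycles for s = 1, -1 form the kernel of a
   |V| x |E| system whose transposed kernel consists of balanced functions; conjugated (a) or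
   divided by the reversing measure (b), these are eigenvectors of M for s.  Hence when s is
   not an eigenvalue of M, twisted cycles exist iff |E| > |V|.  In (b) the constants and, on a
   bipartite graph, a +-1 colouring give the eigenvalues 1 and -1 of M, and connectedness gives
   |V| <= |E| + 1. *)

From HB Require Import structures.
From mathcomp Require Import all_boot all_order all_algebra.
From mathcomp Require Import complex.
From mathcomp Require Import reals.
From mathcomp Require Import ring.
Import Order.TTheory GRing.Theory Num.Theory.
Local Open Scope ring_scope.
Set Implicit Arguments. Unset Strict Implicit. Unset Printing Implicit Defensive.

Lemma two_neq0 (K : numDomainType) : (2 : K) != 0.
Proof. by rewrite pnatr_eq0. Qed.

Lemma sum_mulr_eq (R : pzSemiRingType) (I : finType) (g : I -> R) z :
  \sum_y g y * (z == y)%:R = g z.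
Proof.
rewrite (bigD1 z) //= eqxx mulr1 big1 ?addr0 // => y /negPf yz.
by rewrite eq_sym yz mulr0.
Qed.

Lemma exists_neq0_sum (M : nmodType) (I : finType) (P : pred I) (G : I -> M) :
  \sum_(i | P i) G i != 0 -> exists i, G i != 0.
Proof.
move=> sum0; suff /existsP[i Gi0] : [exists i, G i != 0] by exists i.
apply: contraNT sum0 => /existsPn G0; rewrite big1 // => i _.
by apply/eqP; move: (G0 i); rewrite negbK.
Qed.

Section Eigenvalues.
Variables (F : fieldType) (X : finType).

Definition op_eigenvalue (Op : (X -> F) -> X -> F) (a : F) :=
  exists g : X -> F, (exists x, g x != 0) /\ forall x, Op g x = a * g x.

Lemma sum_enum_val (G : X -> F) : \sum_(k < #|X|) G (enum_val k) = \sum_x G x.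
Proof. by rewrite -big_enum_val. Qed.

Lemma spectrum_rowP (K : X -> X -> F) a :
  spectrum K a <-> op_eigenvalue (fun g j => \sum_i g i * K i j) a.
Proof.
rewrite /spectrum; split.
  move=> /eigenvalueP[v /rowP vK /rV0Pn[k vk0]].
  exists (fun x => v 0 (enum_rank x)); split; first by exists (enum_val k); rewrite enum_valK.
  move=> j; have := vK (enum_rank j); rewrite !mxE => <-.
  by rewrite -sum_enum_val; apply: eq_bigr => i _; rewrite !mxE enum_valK enum_rankK.
move=> [g [[x gx0] gK]]; apply/eigenvalueP; exists (\row_k g (enum_val k)).
  apply/rowP => j; rewrite !mxE -gK -sum_enum_val.
  by apply: eq_bigr => i _; rewrite !mxE.
by apply/rV0Pn; exists (enum_rank x); rewrite mxE enum_rankK.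
Qed.

Lemma spectrum_tr (K : X -> X -> F) a : spectrum (fun i j => K j i) a = spectrum K a.
Proof.
rewrite /spectrum /eigenvalue /eigenspace !kermx_eq0 /row_free -mxrank_tr.
by congr (\rank _ != _); apply/matrixP => i j; rewrite !mxE eq_sym.
Qed.

Lemma spectrum_colP (K : X -> X -> F) a :
  spectrum K a <-> op_eigenvalue (fun g i => \sum_j K i j * g j) a.
Proof.
rewrite -spectrum_tr spectrum_rowP.
by split=> -[g [g0 gK]]; exists g; split=> // i; rewrite -gK; apply: eq_bigr => j _; rewrite mulrC.
Qed.

End Eigenvalues.

Section LinearSystems.
Variables (F : fieldType) (X Y : finType) (P : pred X) (Q : pred Y) (K : Y -> X -> F).

Let Km : 'M[F]_(#|P|, #|Q|) := \matrix_(i, j) K (enum_val j) (enum_val i).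

Let sum_enum_P (G : X -> F) : \sum_(x | P x) G x = \sum_(i < #|P|) G (enum_val i).
Proof. exact: big_enum_val. Qed.

Lemma underdetermined_system : (#|Q| < #|P|)%N ->
  exists v : X -> F, (exists2 x, P x & v x != 0) /\
    forall y, Q y -> \sum_(x | P x) K y x * v x = 0.
Proof.
move=> ltQP; have : kermx Km != 0.
  by rewrite kermx_eq0 /row_free neq_ltn (leq_ltn_trans (rank_leq_col Km) ltQP).
rewrite -nz_row_eq0; set u := nz_row _ => /rV0Pn[i0 ui0].
have uK : u *m Km = 0 by apply/sub_kermxP; exact: nz_row_sub.
have Px0 : enum_val i0 \in P by exact: enum_valP.
exists (fun x => if x \in P then u 0 (enum_rank_in Px0 x) else 0); split.
  by exists (enum_val i0); [exact: enum_valP | rewrite Px0 enum_valK_in].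
move=> y Qy; move/rowP: uK => /(_ (enum_rank_in Qy y)); rewrite !mxE => uKy.
rewrite -[RHS]uKy sum_enum_P; apply: eq_bigr => i _.
by rewrite enum_valP enum_valK_in !mxE enum_rankK_in // mulrC.
Qed.

Hypothesis transpose_inj : forall g : Y -> F, (forall y, ~~ Q y -> g y = 0) ->
  (forall x, P x -> \sum_y g y * K y x = 0) -> forall y, g y = 0.

Lemma rank_system : \rank Km = #|Q|.
Proof.
rewrite -mxrank_tr; apply/eqP; rewrite -/(row_free _) -kermx_eq0.
apply/negP => /negP; rewrite -nz_row_eq0; set z := nz_row _ => /rV0Pn[j0 zj0].
have zK : z *m Km^T = 0 by apply/sub_kermxP; exact: nz_row_sub.
have Qy0 : enum_val j0 \in Q by exact: enum_valP.
pose g y := if y \in Q then z 0 (enum_rank_in Qy0 y) else 0.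
suff /(_ (enum_val j0)) : forall y, g y = 0 by rewrite /g Qy0 enum_valK_in => /eqP; exact/negP.
apply: transpose_inj => [y Qy | x Px]; first by rewrite /g ifF //; exact: negbTE.
move/rowP: zK => /(_ (enum_rank_in Px x)); rewrite !mxE => zKx.
rewrite -[RHS]zKx (bigID (mem Q)) /= [X in _ + X]big1 ?addr0 => [|y Qy]; last first.
  by rewrite /g ifF ?mul0r //; exact: negbTE.
rewrite (big_enum_val (A := Q)); apply: eq_bigr => i _.
by rewrite /g enum_valP enum_valK_in !mxE enum_rankK_in.
Qed.

Lemma card_le_system : (#|Q| <= #|P|)%N.
Proof. by rewrite -rank_system rank_leq_row. Qed.

Lemma card_lt_system (v : X -> F) : (exists2 x, P x & v x != 0) ->
  (forall y, Q y -> \sum_(x | P x) K y x * v x = 0) -> (#|Q| < #|P|)%N.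
Proof.
move=> [x0 Px0 vx0] vK.
suff : ~~ row_free Km by rewrite -{2}rank_system ltn_neqAle rank_leq_row andbT.
rewrite -kermx_eq0; apply: contra vx0 => /eqP Ker0.
have : (\row_i v (enum_val i) <= kermx Km)%MS.
  apply/sub_kermxP/rowP => j; rewrite !mxE -[RHS](vK _ (enum_valP j)).
  by rewrite sum_enum_P; apply: eq_bigr => i _; rewrite !mxE mulrC.
rewrite Ker0 submx0 => /eqP/rowP/(_ (enum_rank_in Px0 x0)).
by rewrite !mxE enum_rankK_in // => ->.
Qed.

End LinearSystems.

Section Arcs.
Variables (V : finType) (adj : rel V).
Local Notation A := (garc adj).

Definition src (e : A) := (val e).1.
Definition dst (e : A) := (val e).2.

Lemma arc_inj e1 e2 : src e1 = src e2 -> dst e1 = dst e2 -> e1 = e2.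
Proof.
case: e1 e2 => [[x1 y1] ?] [[x2 y2] ?]; rewrite /src /dst /= => s12 d12.
by apply: val_inj; rewrite /= s12 d12.
Qed.

Hypothesis adj_sym : symmetric adj.

Definition arev (e : A) : A :=
  exist (fun p => adj p.1 p.2) (dst e, src e) (etrans (adj_sym _ _) (valP e)).

Lemma arevK : involutive arev.
Proof. by move=> e; apply: arc_inj. Qed.

Lemma src_arev e : src (arev e) = dst e. Proof. by []. Qed.
Lemma dst_arev e : dst (arev e) = src e. Proof. by []. Qed.

Lemma sum_arev (M : nmodType) (P : pred A) (G : A -> M) :
  \sum_(e | P e) G e = \sum_(e | P (arev e)) G (arev e).
Proof. exact: (reindex_inj (inv_inj arevK)). Qed.

Section Walk.
Variables (F : fieldType) (c a : A -> F).
Hypothesis two_neq0 : (2 : F) != 0.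
Hypothesis sum_ca : forall u, \sum_(e | src e == u) c e * a e = 1.

Definition outflow (psi : A -> F) u := \sum_(e | src e == u) c e * psi e.

Definition walk_op (psi : A -> F) e :=
  2 * a e * outflow (psi \o arev) (src e) - psi (arev e).

Definition vertex_op (g : V -> F) u := \sum_(e | src e == u) c e * a (arev e) * g (dst e).

Definition joukowski (x : F) := (x + x^-1) / 2.

Definition twisted_cycle (s : F) (psi : A -> F) :=
  (forall e, psi (arev e) = - s * psi e) /\ forall u, outflow psi u = 0.

Definition has_twisted_cycle s :=
  exists psi, (exists e, psi e != 0) /\ twisted_cycle s psi.

Lemma outflow_walk psi u : outflow (walk_op psi) u = outflow (psi \o arev) u.
Proof.
rewrite /outflow /walk_op.
transitivity (\sum_(e | src e == u) 2 * outflow (psi \o arev) u * (c e * a e)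
              - \sum_(e | src e == u) c e * psi (arev e)).
  by rewrite -sumrB; apply: eq_bigr => e /eqP <-; rewrite /outflow; ring.
by rewrite -mulr_sumr sum_ca mulr1 /outflow; ring.
Qed.

Lemma outflow_walk_arev psi u :
  outflow (walk_op psi \o arev) u = 2 * vertex_op (outflow (psi \o arev)) u - outflow psi u.
Proof.
rewrite /outflow /walk_op /vertex_op mulr_sumr -sumrB; apply: eq_bigr => e _ /=.
by rewrite arevK src_arev /outflow; ring.
Qed.

Lemma twisted_cycle_sqr s psi e : twisted_cycle s psi -> psi e != 0 -> s = 1 \/ s = -1.
Proof.
move=> [psi_arev _] psie0; have := psi_arev (arev e); rewrite arevK psi_arev.
move=> /(congr1 (fun y => y - psi e))/eqP; rewrite subrr eq_sym -[X in _ - X]mul1r.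
rewrite mulrA -mulrBl mulf_eq0 (negPf psie0) orbF mulrNN -expr2 subr_eq0 sqrf_eq1.
by case/orP => /eqP; [left | right].
Qed.

Section Eigenvector.
Variables (x : F) (psi : A -> F).
Hypothesis psi_eig : forall e, walk_op psi e = x * psi e.

Lemma outflow_arev_eig u : outflow (psi \o arev) u = x * outflow psi u.
Proof.
rewrite -outflow_walk /outflow mulr_sumr; apply: eq_bigr => e _.
by rewrite psi_eig mulrCA.
Qed.

Lemma vertex_outflow_eig u :
  2 * x * vertex_op (outflow psi) u - outflow psi u = x * x * outflow psi u.
Proof.
have -> : 2 * x * vertex_op (outflow psi) u = 2 * vertex_op (outflow (psi \o arev)) u.
  rewrite /vertex_op !mulr_sumr; apply: eq_bigr => e _.
  by rewrite outflow_arev_eig; ring.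
rewrite -outflow_walk_arev -mulrA -outflow_arev_eig /outflow mulr_sumr.
by apply: eq_bigr => e _ /=; rewrite psi_eig mulrCA.
Qed.

Lemma twisted_cycle_eig : (forall u, outflow psi u = 0) -> twisted_cycle x psi.
Proof.
move=> out0; split=> // e; have := psi_eig e.
rewrite /walk_op outflow_arev_eig out0 !mulr0 sub0r => /eqP.
by rewrite eqr_oppLR mulNr => /eqP.
Qed.

Lemma vertex_eig_outflow u : outflow psi u != 0 ->
  x != 0 /\ op_eigenvalue vertex_op (joukowski x).
Proof.
move=> out0; have x0 : x != 0.
  apply: contra_neq out0 => x0; have := vertex_outflow_eig u.
  by rewrite x0 !(mulr0, mul0r) sub0r => /eqP; rewrite oppr_eq0 => /eqP.
split=> //; exists (outflow psi); split; first by exists u.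
move=> v; apply: (mulfI (mulf_neq0 two_neq0 x0)).
rewrite /joukowski; apply/eqP; rewrite -subr_eq0; apply/eqP.
transitivity (2 * x * vertex_op (outflow psi) v - outflow psi v - x * x * outflow psi v).
  by field; rewrite two_neq0 x0.
by rewrite vertex_outflow_eig subrr.
Qed.

End Eigenvector.

Lemma walk_eig_lift x g : x != 0 -> (exists u, g u != 0) ->
  (forall u, vertex_op g u = joukowski x * g u) -> op_eigenvalue walk_op x.
Proof.
move=> x0 [u0 gu0] g_eig.
pose psi1 e := a e * g (src e).
have out1 u : outflow psi1 u = g u.
  rewrite /outflow /psi1 -[RHS]mul1r -(sum_ca u) mulr_suml.
  by apply: eq_bigr => e /eqP <-; ring.
have out1_arev u : outflow (psi1 \o arev) u = vertex_op g u.
  by apply: eq_bigr => e _; rewrite /psi1 /= src_arev mulrA.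
pose psi0 e := psi1 e - x^-1 * psi1 (arev e).
have [/existsP[e psi0e] | /existsPn psi0_eq0] := boolP [exists e, psi0 e != 0].
  exists psi0; split; first by exists e.
  move=> f; rewrite /walk_op.
  have -> : outflow (psi0 \o arev) (src f) = vertex_op g (src f) - x^-1 * g (src f).
    rewrite -out1 -out1_arev /outflow mulr_sumr -sumrB.
    by apply: eq_bigr => e' _; rewrite /psi0 /= arevK; ring.
  rewrite g_eig /psi0 arevK /psi1 /joukowski src_arev.
  by field; rewrite two_neq0 x0.
have psi1_arev e : psi1 (arev e) = x * psi1 e.
  by move: (psi0_eq0 e); rewrite negbK subr_eq0 => /eqP ->; rewrite mulrA mulfV // mul1r.
exists psi1; split.
  have : outflow psi1 u0 != 0 by rewrite out1.
  by move/exists_neq0_sum => [e]; rewrite mulf_eq0 negb_or => /andP[_]; exists e.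
move=> e; rewrite /walk_op psi1_arev.
have -> : outflow (psi1 \o arev) (src e) = x * g (src e).
  rewrite -out1 /outflow mulr_sumr; apply: eq_bigr => f _ /=.
  by rewrite psi1_arev mulrCA.
by rewrite /psi1; ring.
Qed.

Lemma walk_eig_twisted_cycle s psi : twisted_cycle s psi ->
  forall e, walk_op psi e = s * psi e.
Proof.
move=> [psi_arev out0] e; rewrite /walk_op psi_arev.
have -> : outflow (psi \o arev) (src e) = 0.
  rewrite /outflow (eq_bigr (fun f => - s * (c f * psi f))) => [|f _ /=].
    by rewrite -mulr_sumr -/(outflow psi _) out0 mulr0.
  by rewrite psi_arev mulrCA.
by rewrite mulr0 sub0r mulNr opprK.
Qed.

Theorem walk_spectrum x : op_eigenvalue walk_op x <->
  (x != 0 /\ op_eigenvalue vertex_op (joukowski x)) \/ has_twisted_cycle x.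
Proof.
split=> [[psi [psi0 psi_eig]] | [[x0 [g [g0 g_eig]]] | [psi [psi0 psi_cyc]]]].
- have [/existsP[u outu] | /existsPn out0] := boolP [exists u, outflow psi u != 0].
    by left; exact: vertex_eig_outflow outu.
  right; exists psi; split=> //; apply: twisted_cycle_eig => // u.
  by apply/eqP; move: (out0 u); rewrite negbK.
- exact: walk_eig_lift g0 g_eig.
- by exists psi; split=> //; exact: walk_eig_twisted_cycle.
Qed.

Lemma joukowski_pm1 s : s = 1 \/ s = -1 -> joukowski s = s.
Proof.
rewrite /joukowski => -[] ->; rewrite ?invr1 ?invrN1 -?opprD ?mulNr;
  by rewrite -[1 + 1]/(2%:R : F) mulfV.
Qed.

Lemma walk_spectrum_pm1 s : s = 1 \/ s = -1 ->
  op_eigenvalue walk_op s <-> op_eigenvalue vertex_op s \/ has_twisted_cycle s.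
Proof.
move=> s_pm1; have s0 : s != 0 by case: s_pm1 => ->; rewrite ?oppr_eq0 oner_eq0.
rewrite walk_spectrum joukowski_pm1 //.
by split=> [[[_ ev] | cyc] | [ev | cyc]]; [left | right | left | right].
Qed.

Lemma walk_spectrum_other x : x != 1 -> x != -1 ->
  op_eigenvalue walk_op x <-> x != 0 /\ op_eigenvalue vertex_op (joukowski x).
Proof.
move=> x1 xN1; rewrite walk_spectrum; split=> [[] // [psi [[e psie] cyc]] | ]; last by left.
by case: (twisted_cycle_sqr cyc psie) => /eqP; rewrite ?(negPf x1) ?(negPf xN1).
Qed.

End Walk.
End Arcs.

Section Counting.
Variables (V : finType) (adj : rel V) (adj_sym : symmetric adj) (adj_irr : irreflexive adj).
Local Notation A := (garc adj).
Local Notation arev := (arev adj_sym).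

Definition positive (e : A) := (enum_rank (src e) < enum_rank (dst e))%N.

Lemma src_neq_dst (e : A) : src e != dst e.
Proof. by rewrite /src /dst; apply: contraTneq (valP e) => ->; rewrite adj_irr. Qed.

Lemma positive_arev e : positive (arev e) = ~~ positive e.
Proof.
have ne : nat_of_ord (enum_rank (dst e)) != enum_rank (src e).
  by rewrite val_eqE (inj_eq enum_rank_inj) eq_sym src_neq_dst.
by rewrite /positive src_arev dst_arev -leqNgt ltn_neqAle ne.
Qed.

Lemma card_edges : #|edges adj| = #|[pred e : A | positive e]|.
Proof.
pose arc x y (xy : adj x y) : A := exist (fun p => adj p.1 p.2) (x, y) xy.
have -> : edges adj = [set [set src e; dst e] | e in [pred e : A | positive e]].
  apply/setP => S; apply/imset2P/imsetP => [[x y _] | [e _ ->]].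
    rewrite inE => xy ->.
    have [xy_pos | ] := ltnP (enum_rank x) (enum_rank y); first by exists (arc x y xy).
    rewrite leq_eqVlt => /orP[/eqP/val_inj/enum_rank_inj yx | yx_pos].
      by move: xy; rewrite yx adj_irr.
    by exists (arc y x (etrans (adj_sym y x) xy)); rewrite // setUC.
  by exists (src e) (dst e); rewrite // inE; exact: (valP e).
apply: card_in_imset => e1 e2; rewrite !inE /positive => pos1 pos2 e12.
have := src_neq_dst e1; have := src_neq_dst e2.
have : src e1 \in [set src e2; dst e2] by rewrite -e12 set21.
have : dst e1 \in [set src e2; dst e2] by rewrite -e12 set22.
rewrite !inE => /orP[]/eqP d12 /orP[]/eqP s12; rewrite ?d12 ?s12 ?eqxx // => _ _.
  by move: pos1; rewrite s12 d12 ltnNge (ltnW pos2).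
exact: arc_inj.
Qed.

Section TwistedIncidence.
Variables (F : fieldType) (c : A -> F) (s : F).

Definition twisted_incidence u e :=
  (src e == u)%:R * c e - s * (dst e == u)%:R * c (arev e).

Definition balanced (g : V -> F) := forall e, g (src e) * c e = s * g (dst e) * c (arev e).

Lemma outflow_twisted (psi : A -> F) u : (forall e, psi (arev e) = - s * psi e) ->
  outflow c psi u = \sum_(e | positive e) twisted_incidence u e * psi e.
Proof.
move=> psi_arev; rewrite /outflow big_mkcond (bigID positive) /= [X in _ + X](sum_arev adj_sym).
rewrite [X in _ + X](eq_bigl positive) => [|e]; last by rewrite positive_arev negbK.
rewrite -big_split /=; apply: eq_bigr => e _.
rewrite /twisted_incidence src_arev psi_arev.
by case: (src e == u); case: (dst e == u); rewrite /= ?mul0r ?mul1r; ring.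
Qed.

Lemma sum_twisted_incidence (g : V -> F) e :
  \sum_u g u * twisted_incidence u e = g (src e) * c e - s * g (dst e) * c (arev e).
Proof.
rewrite -(sum_mulr_eq g (src e)) -(sum_mulr_eq g (dst e)) mulr_sumr !mulr_suml -sumrB.
by apply: eq_bigr => u _; rewrite /twisted_incidence; ring.
Qed.

Hypothesis s2 : s * s = 1.

Lemma balanced_positive (g : V -> F) :
  (forall e, positive e -> \sum_u g u * twisted_incidence u e = 0) -> balanced g.
Proof.
move=> gK e; have [pos_e | /negbTE npos_e] := boolP (positive e).
  by apply/eqP; rewrite -subr_eq0 -sum_twisted_incidence gK.
have pos_ae : positive (arev e) by rewrite positive_arev npos_e.
have /eqP := gK _ pos_ae.
rewrite sum_twisted_incidence src_arev dst_arev arevK subr_eq0 => /eqP ge.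
by rewrite -mulrA ge !mulrA s2 mul1r.
Qed.

Lemma has_twisted_cycle_of_card : (#|V| < #|edges adj|)%N -> has_twisted_cycle adj_sym c s.
Proof.
rewrite card_edges => /(underdetermined_system (Q := predT) twisted_incidence).
move=> [v [[e0 pos_e0 ve0] vK]].
pose psi e := if positive e then v e else - s * v (arev e).
have psi_arev e : psi (arev e) = - s * psi e.
  rewrite /psi positive_arev arevK; case: (positive e) => //=.
  by rewrite mulrA mulrNN s2 mul1r.
exists psi; split; first by exists e0; rewrite /psi (_ : positive e0 = true).
split=> // u; rewrite outflow_twisted // -[RHS](vK u isT).
by apply: eq_bigr => e pos_e; rewrite /psi pos_e.
Qed.

Lemma card_of_has_twisted_cycle : (forall g, balanced g -> forall u, g u = 0) ->
  has_twisted_cycle adj_sym c s -> (#|V| < #|edges adj|)%N.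
Proof.
move=> bal0 [psi [[e0 psie0] [psi_arev out0]]]; rewrite card_edges.
have s0 : s != 0 by apply/eqP => s0; move/eqP: s2; rewrite s0 mul0r eq_sym oner_eq0.
apply: (card_lt_system (Q := predT) (K := twisted_incidence) _ (v := psi)).
- by move=> g _ /balanced_positive; exact: bal0.
- have [pos_e0 | npos_e0] := boolP (positive e0); first by exists e0.
  by exists (arev e0); rewrite /= ?positive_arev // psi_arev mulf_neq0 ?oppr_eq0.
- by move=> u _; rewrite -outflow_twisted.
Qed.

Lemma has_twisted_cycle_card : (forall g, balanced g -> forall u, g u = 0) ->
  has_twisted_cycle adj_sym c s <-> (#|V| < #|edges adj|)%N.
Proof.
by move=> bal0; split; [exact: card_of_has_twisted_cycle | exact: has_twisted_cycle_of_card].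
Qed.

End TwistedIncidence.

Lemma connect_constant (T : eqType) (g : V -> T) : (forall e : A, g (src e) = g (dst e)) ->
  forall x y, connect adj x y -> g x = g y.
Proof.
move=> g_const x y; have cl : closed adj [pred z | g z == g x].
  by move=> z1 z2 z12; rewrite !inE (g_const (exist _ (z1, z2) z12)).
by move=> /(closed_connect cl); rewrite !inE eqxx => /esym/eqP.
Qed.

Lemma card_le_edges_connected : (0 < #|V|)%N -> (forall x y, connect adj x y) ->
  (#|V| <= #|edges adj| + 1)%N.
Proof.
move=> /card_gt0P[r _] conn.
have : (#|predC1 r| <= #|[pred e : A | positive e]|)%N.
  apply: (card_le_system (K := twisted_incidence (fun=> 1 : rat) 1)).
  move=> g gr0 /(balanced_positive (mulr1 1)) g_const y.
  rewrite (connect_constant (g := g) _ (conn y r)); first by apply: gr0; rewrite negbK.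
  by move=> e; have := g_const e; rewrite !mulr1 mul1r.
by rewrite cardC1 -card_edges; case: #|V| => // n; rewrite addn1.
Qed.

End Counting.

Section KernelSums.
Variables (V : finType) (adj : rel V) (adj_sym : symmetric adj) (F : fieldType).
Local Notation A := (garc adj).
Local Notation arev := (arev adj_sym).

Lemma sum_walk_kernel (k : A -> F) (psi : A -> F) e :
  \sum_f (if (val f).2 == (val e).1 then k f - (val e == ((val f).2, (val f).1))%:R else 0) * psi f
  = \sum_(g | src g == src e) k (arev g) * psi (arev g) - psi (arev e).
Proof.
have rev_eq f : (val e == ((val f).2, (val f).1)) = (f == arev e).
  case: e f => [[x y] ?] [[z t] ?]; rewrite -val_eqE /= !xpair_eqE.
  by rewrite andbC (eq_sym x) (eq_sym y).
transitivity (\sum_f (if dst f == src e then k f * psi f else 0) - \sum_f (f == arev e)%:R * psi f).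
  rewrite -sumrB; apply: eq_bigr => f _; rewrite rev_eq.
  have [f_ae | _] := eqVneq f (arev e); last by case: ifP; rewrite ?mul0r ?subr0 ?mulrBl.
  by rewrite f_ae dst_arev eqxx mulrBl mul1r.
rewrite -big_mkcond (sum_arev adj_sym); congr (_ - _).
rewrite (bigD1 (arev e)) //= eqxx mul1r big1 ?addr0 // => f /negPf ->.
exact: mul0r.
Qed.

Lemma sum_by_src (g : V -> F) (h : A -> F) (P : pred A) :
  \sum_u g u * \sum_(e | (src e == u) && P e) h e = \sum_(e | P e) g (src e) * h e.
Proof.
rewrite (partition_big (fun e : A => src e) predT) //=; apply: eq_bigr => u _; rewrite mulr_sumr.
by apply: eq_big => [e | e /andP[/eqP <- _]] //; rewrite andbC.
Qed.

Lemma sum_by_dst (g : V -> F) (h : A -> F) u :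
  \sum_v (\sum_(e | (src e == u) && (dst e == v)) h e) * g v =
  \sum_(e | src e == u) h e * g (dst e).
Proof.
rewrite (partition_big (fun e : A => dst e) predT (P := fun e => src e == u)) //=.
by apply: eq_bigr => v _; rewrite mulr_suml; apply: eq_big => // e /andP[_ /eqP <-].
Qed.

End KernelSums.

Section PartA.
Local Open Scope complex_scope.
Variables (R : realType) (V : finType) (adj : rel V).
Hypotheses (adj_sym : symmetric adj) (adj_irr : irreflexive adj).
Local Notation A := (garc adj).
Local Notation C := R[i].
Variable w : V -> V -> C.
Hypothesis w_normalized :
  forall u, \sum_(e : A | (val e).1 == u) `|w (val e).1 (val e).2| ^+ 2 = 1.

Let c (e : A) := (w (src e) (dst e))^*.
Let a (e : A) := w (src e) (dst e).
Local Notation U := (walk_op adj_sym c a).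
Local Notation M := (vertex_op adj_sym c a).

Lemma U1_sum_ca u : \sum_(e | src e == u) c e * a e = 1.
Proof. by rewrite -(w_normalized u); apply: eq_bigr => e _; rewrite sqr_normc mulrC. Qed.

Lemma U1_spectrum x : spectrum (U1_kernel adj w) x <-> op_eigenvalue U x.
Proof.
have U1E psi e : \sum_f U1_kernel adj w e f * psi f = U psi e.
  pose k (f : A) := 2 * w (val e).1 (val e).2 * (w (val f).2 (val f).1)^*.
  rewrite (sum_walk_kernel adj_sym k) /walk_op /outflow mulr_sumr; congr (_ - _).
  by apply: eq_bigr => f _ /=; rewrite /k /c /a /src /dst; ring.
by rewrite spectrum_colP; split=> -[psi [psi0 psiU]]; exists psi; split=> // e; rewrite -psiU U1E.
Qed.

Lemma T_spectrum mu : spectrum (T_kernel adj w) mu <-> op_eigenvalue M mu.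
Proof.
have TE g u : \sum_v g v * T_kernel adj w v u = M g u.
  rewrite /T_kernel sum_by_src (sum_arev adj_sym).
  by apply: eq_bigr => e _; rewrite /c /a /=; ring.
by rewrite spectrum_rowP; split=> -[g [g0 gT]]; exists g; split=> // u; rewrite -gT TE.
Qed.

Lemma balanced_conj_eig s g : s = 1 \/ s = -1 -> balanced adj_sym c s g ->
  forall u, M (fun v => (g v)^*) u = s * (g u)^*.
Proof.
move=> s_pm1 g_bal u; have s_conj : s^* = s.
  by case: s_pm1 => ->; rewrite ?rmorphN; [|congr (- _)]; exact: conjc1.
rewrite /vertex_op -[RHS]mulr1 -(U1_sum_ca u) mulr_sumr; apply: eq_bigr => e /eqP <-.
have := congr1 conjc (g_bal (arev adj_sym e)).
rewrite src_arev dst_arev arevK !rmorphM /= s_conj /c /a !conjcK /= => ge.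
by rewrite -mulrA [w _ _ * _]mulrC ge; ring.
Qed.

Lemma balanced_T_eq0 s : s = 1 \/ s = -1 -> ~~ spectrum (T_kernel adj w) s ->
  forall g, balanced adj_sym c s g -> forall u, g u = 0.
Proof.
move=> s_pm1 sT g g_bal u; apply/eqP; apply: contraNT sT => gu0.
apply/T_spectrum; exists (fun v => (g v)^*); split; last exact: balanced_conj_eig.
by exists u; rewrite conjc_eq0.
Qed.

Lemma U1_spectrum_pm1 s : s = 1 \/ s = -1 ->
  spectrum (U1_kernel adj w) s <-> spectrum (T_kernel adj w) s \/ (#|V| < #|edges adj|)%N.
Proof.
move=> s_pm1; have s2 : s * s = 1 by case: s_pm1 => ->; rewrite ?mulrNN mulr1.
rewrite U1_spectrum (walk_spectrum_pm1 _ (two_neq0 _) U1_sum_ca s_pm1) -T_spectrum.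
have [sT | nsT] := boolP (spectrum (T_kernel adj w) s); first by split=> _; left.
by rewrite (has_twisted_cycle_card adj_irr s2 (balanced_T_eq0 s_pm1 nsT)).
Qed.

Lemma U1_spectrum_other x : x != 1 -> x != -1 ->
  spectrum (U1_kernel adj w) x <-> preim_nz (@phi1 R) (spectrum (T_kernel adj w)) x.
Proof.
move=> x1 xN1; rewrite U1_spectrum (walk_spectrum_other _ (two_neq0 _) U1_sum_ca x1 xN1).
by rewrite /preim_nz; split=> [[-> /T_spectrum] | /andP[-> /T_spectrum]].
Qed.

Lemma proposition3_a : let n (s : C) : int :=
    (#|edges adj|%:Z - #|V|%:Z + (spectrum (T_kernel adj w) s)%:Z)%R in
  forall x : C, spectrum (U1_kernel adj w) x <->
    [\/ preim_nz (@phi1 R) (spectrum (T_kernel adj w)) x,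
        x = 1 /\ (0 < n 1)%R | x = -1 /\ (0 < n (-1))%R].
Proof.
move=> n x; have N11 : (1 : C) != -1 by rewrite -addr_eq0 two_neq0.
have pm1E s : s = 1 \/ s = -1 -> spectrum (U1_kernel adj w) s <->
    preim_nz (@phi1 R) (spectrum (T_kernel adj w)) s \/ (0 < n s)%R.
  move=> s_pm1; have phi_s : phi1 s = s := joukowski_pm1 (two_neq0 _) s_pm1.
  rewrite U1_spectrum_pm1 // /preim_nz phi_s.
  have -> : s != 0 by case: s_pm1 => ->; rewrite ?oppr_eq0 oner_eq0.
  have [sT | nsT] := boolP (spectrum (T_kernel adj w) s); first by split=> _; left.
  by rewrite /n andTb (negbTE nsT) addr0 subr_gt0 ltz_nat; exact: iff_refl.
have [-> | x1] := eqVneq x 1.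
  rewrite pm1E; last by left.
  by split=> [[? | ?] | [? | [_ ?] | [/eqP]]];
    [constructor 1 | constructor 2 | left | right | rewrite (negPf N11)].
have [-> | xN1] := eqVneq x (-1).
  rewrite pm1E; last by right.
  by split=> [[? | ?] | [? | [/eqP] | [_ ?]]];
    [constructor 1 | constructor 3 | left | rewrite eq_sym (negPf N11) | right].
rewrite U1_spectrum_other //.
by split=> [? | [// | [/eqP] | [/eqP]]]; [constructor 1 | rewrite (negPf x1) | rewrite (negPf xN1)].
Qed.

End PartA.

Section PartB.
Local Open Scope complex_scope.
Variables (R : realType) (V : finType) (adj : rel V).
Hypotheses (adj_sym : symmetric adj) (adj_irr : irreflexive adj).
Hypotheses (V_gt0 : (0 < #|V|)%N) (adj_connect : forall x y, connect adj x y).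
Local Notation A := (garc adj).
Local Notation C := R[i].
Variables (w : V -> V -> R) (m : V -> R).
Hypothesis w_stochastic : forall u, \sum_(e : A | (val e).1 == u) w (val e).1 (val e).2 = 1.
Hypothesis m_gt0 : forall u, 0 < m u.
Hypothesis w_reversible : forall e : A,
  m (val e).1 * w (val e).1 (val e).2 = m (val e).2 * w (val e).2 (val e).1.

Let c (e : A) := (w (src e) (dst e))%:C.
Let a (e : A) : C := 1.
Local Notation U := (walk_op adj_sym c a).
Local Notation M := (vertex_op adj_sym c a).
Local Notation S := (preim_nz (@phi2 R) (spectrum (L_kernel adj w))).

Lemma U2_sum_ca u : \sum_(e | src e == u) c e * a e = 1.
Proof.
under eq_bigr do rewrite mulr1.
by rewrite -rmorph_sum /= w_stochastic.
Qed.

Lemma U2_spectrum x : spectrum (U2_kernel adj w) x <-> op_eigenvalue U x.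
Proof.
have U2E psi e : \sum_f U2_kernel adj w e f * psi f = U psi e.
  pose k (f : A) := 2 * (w (val f).2 (val f).1)%:C.
  rewrite (sum_walk_kernel adj_sym k) /walk_op /outflow mulr_sumr; congr (_ - _).
  by apply: eq_bigr => f _ /=; rewrite /k /c /a /src /dst; ring.
by rewrite spectrum_colP; split=> -[psi [psi0 psiU]]; exists psi; split=> // e; rewrite -psiU U2E.
Qed.

Lemma L_spectrum mu : spectrum (L_kernel adj w) mu <-> op_eigenvalue M (mu + 1).
Proof.
have LE g u : \sum_v L_kernel adj w u v * g v = M g u - g u.
  rewrite /L_kernel; under eq_bigr do rewrite mulrBl [(_ == _)%:R * _]mulrC.
  rewrite sumrB sum_by_dst sum_mulr_eq; congr (_ - _).
  by apply: eq_bigr => e _; rewrite /a mulr1.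
rewrite spectrum_colP; split=> -[g [g0 gL]]; exists g; split=> // u.
  by move/eqP: (gL u); rewrite LE subr_eq mulrDl mul1r => /eqP.
by rewrite LE gL mulrDl mul1r addrK.
Qed.

Lemma preim_phi2_spectrum x : S x <-> x != 0 /\ op_eigenvalue M (joukowski x).
Proof.
have phi2E : phi2 x + 1 = joukowski x := subrK 1 _.
split=> [/andP[x0 /L_spectrum] | [x0 xM]]; first by rewrite phi2E.
by apply/andP; split=> //; apply/L_spectrum; rewrite phi2E.
Qed.

Lemma preim_phi2_pm1 s : s = 1 \/ s = -1 -> S s <-> op_eigenvalue M s.
Proof.
move=> s_pm1; rewrite preim_phi2_spectrum (joukowski_pm1 (two_neq0 _) s_pm1).
by split=> [[] | ] //; split=> //; case: s_pm1 => ->; rewrite ?oppr_eq0 oner_neq0.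
Qed.

Lemma vertex_eig_arcwise s f : (forall e, c e * f (dst e) = s * (c e * f (src e))) ->
  forall u, M f u = s * f u.
Proof.
move=> f_arc u; rewrite /vertex_op -[RHS]mulr1 -(U2_sum_ca u) mulr_sumr.
by apply: eq_bigr => e /eqP <-; rewrite /a mulr1 f_arc; ring.
Qed.

Lemma preim_phi2_1 : S 1.
Proof.
have [u _] := card_gt0P V_gt0.
apply/(preim_phi2_pm1 (or_introl erefl)); exists (fun=> 1).
split; first by exists u; exact: oner_neq0.
by apply: vertex_eig_arcwise => e; rewrite mul1r.
Qed.

Lemma preim_phi2_N1_bipartite : bipartite adj -> S (-1).
Proof.
move=> [col col_adj]; have [u _] := card_gt0P V_gt0.
apply/(preim_phi2_pm1 (or_intror erefl)); exists (fun v => if col v then 1 else -1); split.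
  by exists u; case: (col u); rewrite ?oppr_eq0 oner_neq0.
apply: vertex_eig_arcwise => e; have := col_adj _ _ (valP e).
by rewrite -/(src e) -/(dst e); case: (col (src e)); case: (col (dst e)) => // _; ring.
Qed.

Lemma balanced_L_eq0 : ~~ S (-1) ->
  forall g, balanced adj_sym c (-1) g -> forall u, g u = 0.
Proof.
move=> nS g g_bal u; apply/eqP; apply: contraNT nS => gu0.
have m0 v : (m v)%:C != 0 :> C by rewrite eq_complex /= eqxx andbT gt_eqF.
apply/(preim_phi2_pm1 (or_intror erefl)); exists (fun v => g v / (m v)%:C); split.
  by exists u; rewrite mulf_neq0 ?invr_neq0.
apply: vertex_eig_arcwise => e; have := g_bal e.
have : (m (src e))%:C * c e = (m (dst e))%:C * c (arev adj_sym e).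
  by rewrite -!rmorphM /= w_reversible.
rewrite [c (arev _ _)]/c src_arev dst_arev.
(* cross-multiplied: c(e) g(t) m(o) = g(t) m(t) c(rev e) = - m(t) g(o) c(e) *)
move: (m0 (src e)) (m0 (dst e)) (c e) (w (dst e) (src e))%:C.
set ms := (m _)%:C; set md := (m _)%:C => ms0 md0 ce ce' mce gce.
apply: (mulfI (mulf_neq0 ms0 md0)); transitivity (g (dst e) * (ms * ce)).
  by field; rewrite md0.
rewrite mce; transitivity (- md * (-1 * g (dst e) * ce')); first by ring.
by rewrite -gce; field; rewrite ms0.
Qed.

Lemma U2_spectrumE x :
  spectrum (U2_kernel adj w) x <-> S x \/ (x = -1 /\ (#|V| < #|edges adj|)%N).
Proof.
rewrite U2_spectrum; have [-> | x1] := eqVneq x 1.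
  rewrite (walk_spectrum_pm1 _ (two_neq0 _) U2_sum_ca (or_introl erefl)).
  rewrite -preim_phi2_pm1; last by left.
  by split=> _; left; exact: preim_phi2_1.
have [-> | xN1] := eqVneq x (-1).
  rewrite (walk_spectrum_pm1 _ (two_neq0 _) U2_sum_ca (or_intror erefl)).
  rewrite -preim_phi2_pm1; last by right.
  have [SN1 | nSN1] := boolP (S (-1)); first by split=> _; left.
  have s2 : (-1 : C) * -1 = 1 by rewrite mulrNN mulr1.
  rewrite (has_twisted_cycle_card adj_irr s2 (balanced_L_eq0 nSN1)).
  by split=> [[// | ?] | [// | [_ ?]]]; right.
rewrite (walk_spectrum_other _ (two_neq0 _) U2_sum_ca x1 xN1) -preim_phi2_spectrum.
by split=> [? | [// | [/eqP]]]; [left | rewrite (negPf xN1)].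
Qed.

Lemma proposition3_b x :
  [/\ (#|edges adj| + 1 = #|V|)%N -> (spectrum (U2_kernel adj w) x <-> S x),
      (#|edges adj| = #|V|)%N /\ ~ bipartite adj ->
        (spectrum (U2_kernel adj w) x <-> S x \/ x = 1)
    & ~ (#|edges adj| + 1 = #|V|)%N -> ~ ((#|edges adj| = #|V|)%N /\ ~ bipartite adj) ->
        (spectrum (U2_kernel adj w) x <-> [\/ S x, x = 1 | x = -1])].
Proof.
have V_le := card_le_edges_connected adj_sym adj_irr V_gt0 adj_connect.
split=> [tree | [unicyclic _] | ntree nuni]; rewrite U2_spectrumE.
- split=> [[// | [_ lt]] | ]; last by left.
  by move: lt; rewrite -tree addn1 ltnNge leqnSn.
- by split=> [[| [_]] | [| ->]]; [left | rewrite unicyclic ltnn | left | left; exact: preim_phi2_1].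
have [SN1 | nSN1] := boolP (S (-1)).
  by split=> [[| [->]] | [| -> | ->]];
    [constructor 1 | constructor 3 | left | left; exact: preim_phi2_1 | left].
have E_neq : #|edges adj| != #|V|.
  by apply/eqP => uni; apply: nuni; split=> // /preim_phi2_N1_bipartite; exact/negP.
have E_gt : (#|V| < #|edges adj|)%N.
  rewrite ltn_neqAle eq_sym E_neq -ltnS ltn_neqAle -(addn1 #|edges adj|) V_le andbT.
  by apply/eqP => V_eq; apply: ntree.
by split=> [[| [->]] | [| -> | ->]];
  [constructor 1 | constructor 3 | left | left; exact: preim_phi2_1 | right].
Qed.

End PartB.

Unset Implicit Arguments.

Theorem proposition3 (R : realType) (V : finType) (adj : rel V)
  (Hsimple : simple_graph adj) (Hconn : connected_graph adj) :
  (* (a) *)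
  (forall w1 : V -> V -> R[i],
     (forall u : V,
        \sum_(e : garc adj | (val e).1 == u) `|w1 (val e).1 (val e).2| ^+ 2 = 1) ->
     let n (s : R[i]) : int :=
       (#|edges adj|%:Z - #|V|%:Z + (spectrum (T_kernel adj w1) s)%:Z)%R in
     forall x : R[i],
       spectrum (U1_kernel adj w1) x <->
       [\/ preim_nz (@phi1 R) (spectrum (T_kernel adj w1)) x,
           x = 1 /\ (0 < n 1)%R
         | x = -1 /\ (0 < n (-1))%R]) /\
  (* (b) *)
  (forall (w2 : V -> V -> R) (mV : V -> R),
     (forall e : garc adj, 0 < w2 (val e).1 (val e).2) ->
     (forall u : V, \sum_(e : garc adj | (val e).1 == u) w2 (val e).1 (val e).2 = 1) ->
     (forall u : V, 0 < mV u) ->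
     (forall e : garc adj,
        mV (val e).1 * w2 (val e).1 (val e).2 = mV (val e).2 * w2 (val e).2 (val e).1) ->
     let S := preim_nz (@phi2 R) (spectrum (L_kernel adj w2)) in
     forall x : R[i],
       [/\ (#|edges adj| + 1 = #|V|)%N ->
              (spectrum (U2_kernel adj w2) x <-> S x),
            (#|edges adj| = #|V|)%N /\ ~ bipartite adj ->
              (spectrum (U2_kernel adj w2) x <-> S x \/ x = 1)
          & ~ (#|edges adj| + 1 = #|V|)%N ->
            ~ ((#|edges adj| = #|V|)%N /\ ~ bipartite adj) ->
              (spectrum (U2_kernel adj w2) x <-> [\/ S x, x = 1 | x = -1])]).
Proof.
have [adj_sym adj_irr] := Hsimple; have [V_gt0 adj_connect] := Hconn.
split=> [w1 w1_normalized | w2 mV _ w2_stochastic mV_gt0 w2_reversible S x].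
  exact: (proposition3_a adj_sym adj_irr w1_normalized).
exact: (proposition3_b adj_sym adj_irr V_gt0 adj_connect w2_stochastic mV_gt0 w2_reversible x).
Qed.
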